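(* Let $\mu\ge 2$ be an integer. For a prime $p$ and integer $r\ge 1$ set $$\mathrm{weight}(p,r)=\log_2 I_{1/p}(r-1,\mu)-\log_2 I_{1/p}(r,\mu),\qquad \mathrm{density}(p,r)=\frac{\log_2 p}{\mathrm{weight}(p,r)}.$$ Then for every fixed prime $p$, $\mathrm{density}(p,r)$ is decreasing in $r\ge 1$, and $\mathrm{density}(p,1)=\dfrac{\ln p}{-\ln\big(1-(1-1/p)^\mu\big)}$ is non-increasing as a function of the prime $p$.
   Context: For $\epsilon\in(0,1)$ and integers $k\ge 0$, $\mu\ge 1$, the regularized (incomplete) beta function is $I_\epsilon(k,\mu)=(1-\epsilon)^\mu\sum_{j=k}^{\infty}\binom{\mu+j-1}{j}\epsilon^j$; in particular $I_\epsilon(0,\mu)=1$ and $I_\epsilon(1,\mu)=1-(1-\epsilon)^\mu$. *)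

From Stdlib Require Import Reals ZArith Znumtheory.
From Coquelicot Require Import Coquelicot.
Open Scope R_scope.

Definition log2 (x : R) : R := ln x / ln 2.

Definition Ibeta (eps : R) (k mu : nat) : R :=
  (1 - eps) ^ mu *
  Series (fun j : nat =>
            if (k <=? j)%nat then Binomial.C (mu + j - 1) j * eps ^ j else 0).

Definition weight (mu p r : nat) : R :=
  log2 (Ibeta (/ INR p) (r - 1) mu) - log2 (Ibeta (/ INR p) r mu).

Definition density (mu p r : nat) : R := log2 (INR p) / weight mu p r.

Definition is_prime (p : nat) : Prop := prime (Z.of_nat p).

From Stdlib Require Import Reals ZArith Znumtheory Lia Lra.
From Coquelicot Require Import Coquelicot.
Open Scope R_scope.

(* With e = 1/p, m = mu - 1 and T_k = sum_{j >= k} C(m + j, j) e^j, one has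
   I_e(k, mu) = (1 - e)^mu T_k, so density(p, r) = ln p / (ln T_(r-1) - ln T_r).
   For m >= 1 the terms C(m + j, j) e^j form a strictly log-concave sequence,
   hence so do the tails T_k, and the weights strictly increase with r.
   Since T_0 = (1 - e)^(-mu) and T_1 = T_0 - 1, density(p, 1) = y / h(y) with
   y = ln p and h(y) = -ln (1 - (1 - exp (-y))^mu).  As h(0) = 0 and
   h'(y) = mu w^m / (1 + w + ... + w^m), w = 1 - exp (-y), is nondecreasing,
   the slope h(y) / y is nondecreasing. *)

Lemma Series_nonneg (a : nat -> R) :
  (forall n, 0 <= a n) -> ex_series a -> 0 <= Series a.
Proof.
  intros Ha Hex.
  assert (H := Series_le (fun n => 0 * a n) a
                 ltac:(intros n; specialize (Ha n); lra) Hex).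
  now rewrite Series_scal_l, Rmult_0_l in H.
Qed.

Lemma Series_pos (a : nat -> R) :
  (forall n, 0 < a n) -> ex_series a -> 0 < Series a.
Proof.
  intros Ha Hex. rewrite Series_incr_1 by exact Hex.
  assert (0 <= Series (fun k => a (S k))).
  { apply Series_nonneg; [intros n; left; apply Ha|].
    now apply (ex_series_incr_1 a). }
  specialize (Ha 0%nat). lra.
Qed.

Definition tail (a : nat -> R) (k : nat) : R := Series (fun j => a (k + j)%nat).

Section Tails.

Variable a : nat -> R.
Hypothesis a_pos : forall j, 0 < a j.
Hypothesis a_summable : ex_series a.

Lemma ex_series_shift k : ex_series (fun j => a (k + j)%nat).
Proof. now apply ex_series_incr_n. Qed.

Lemma tail_S k : tail a k = a k + tail a (S k).
Proof.
  unfold tail. rewrite Series_incr_1 by apply ex_series_shift.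
  rewrite Nat.add_0_r. f_equal. apply Series_ext. intros n. f_equal. lia.
Qed.

Lemma tail_pos k : 0 < tail a k.
Proof. apply Series_pos; [intros; apply a_pos | apply ex_series_shift]. Qed.

Lemma tail_S_lt k : tail a (S k) < tail a k.
Proof. rewrite (tail_S k). pose proof (a_pos k). lra. Qed.

Hypothesis a_log_concave : forall j, a j * a (S (S j)) < a (S j) ^ 2.

Lemma log_concave_spread q n : a q * a (S (S q) + n) < a (S q) * a (S q + n).
Proof.
  induction n as [|n IH].
  - rewrite !Nat.add_0_r. specialize (a_log_concave q). lra.
  - replace (S (S q) + S n)%nat with (S (S (S q + n))) by lia.
    replace (S (S q) + n)%nat with (S (S q + n)) in IH by lia.
    replace (S q + S n)%nat with (S (S q + n)) by lia.
    set (j := (S q + n)%nat) in *.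
    pose proof (a_log_concave j).
    pose proof (a_pos q). pose proof (a_pos (S q)). pose proof (a_pos j).
    pose proof (a_pos (S j)). pose proof (a_pos (S (S j))).
    (* multiply [IH] by the hypothesis at [j] and cancel [a j * a (S j)] *)
    apply (Rmult_lt_reg_r (a j * a (S j))); [nra|].
    assert (a q * a (S j) * (a j * a (S (S j))) < a (S q) * a j * (a j * a (S (S j))))
      by (apply Rmult_lt_compat_r; nra).
    assert (a (S q) * a j * (a j * a (S (S j))) < a (S q) * a j * a (S j) ^ 2)
      by (apply Rmult_lt_compat_l; nra).
    nra.
Qed.

Lemma tail_spread q : a q * tail a (S (S q)) < a (S q) * tail a (S q).
Proof.
  unfold tail. rewrite <- !Series_scal_l.
  apply Rlt_0_minus. rewrite <- Series_minus.
  - apply Series_pos.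
    + intros n. pose proof (log_concave_spread q n). lra.
    + apply (ex_series_minus (fun n => a (S q) * a (S q + n)%nat)
                             (fun n => a q * a (S (S q) + n)%nat));
        apply (ex_series_scal_l _ (fun j => a _)), ex_series_shift.
  - apply (ex_series_scal_l _ (fun j => a _)), ex_series_shift.
  - apply (ex_series_scal_l _ (fun j => a _)), ex_series_shift.
Qed.

Lemma tail_log_concave q : tail a q * tail a (S (S q)) < tail a (S q) ^ 2.
Proof.
  pose proof (tail_spread q). pose proof (tail_pos (S (S q))).
  rewrite (tail_S q), (tail_S (S q)) in *. nra.
Qed.

End Tails.

Lemma C_pos n k : 0 < Binomial.C n k.
Proof.
  unfold Binomial.C. apply Rdiv_lt_0_compat; [apply lt_0_INR, lt_O_fact|].
  apply Rmult_lt_0_compat; apply lt_0_INR, lt_O_fact.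
Qed.

Lemma C_n0 n : Binomial.C n 0 = 1.
Proof.
  unfold Binomial.C. rewrite Nat.sub_0_r. simpl. field. apply INR_fact_neq_0.
Qed.

Lemma C_SS n k : (k <= n)%nat ->
  Binomial.C (S n) (S k) = Binomial.C n k * INR (S n) / INR (S k).
Proof.
  intros Hkn. unfold Binomial.C.
  replace (S n - S k)%nat with (n - k)%nat by lia.
  change (fact (S n)) with (S n * fact n)%nat.
  change (fact (S k)) with (S k * fact k)%nat.
  rewrite !mult_INR. field.
  repeat split; try apply INR_fact_neq_0; apply not_0_INR; lia.
Qed.

Lemma hockey_stick m n :
  sum_f_R0 (fun k => Binomial.C (m + k) k) n = Binomial.C (S m + n) n.
Proof.
  induction n as [|n IH].
  - simpl. now rewrite Nat.add_0_r, !C_n0.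
  - simpl sum_f_R0. rewrite IH.
    replace (m + S n)%nat with (S m + n)%nat by lia.
    rewrite pascal by lia.
    now replace (S m + S n)%nat with (S (S m + n)) by lia.
Qed.

Definition negbin (m : nat) (e : R) (j : nat) : R := Binomial.C (m + j) j * e ^ j.

Lemma negbin_nonneg m e j : 0 <= e -> 0 <= negbin m e j.
Proof.
  intros He. apply Rmult_le_pos; [left; apply C_pos | now apply pow_le].
Qed.

Lemma negbin_pos m e j : 0 < e -> 0 < negbin m e j.
Proof.
  intros He. apply Rmult_lt_0_compat; [apply C_pos | now apply pow_lt].
Qed.

Lemma negbin_0 m e : negbin m e 0 = 1.
Proof. unfold negbin. rewrite Nat.add_0_r, C_n0. simpl. ring. Qed.

Lemma negbin_S m e j :
  negbin m e (S j) = negbin m e j * (e * INR (m + S j) / INR (S j)).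
Proof.
  unfold negbin. replace (m + S j)%nat with (S (m + j)) by lia.
  rewrite C_SS by lia. simpl pow. field. apply not_0_INR; lia.
Qed.

Lemma negbin_log_concave m e j : (1 <= m)%nat -> 0 < e ->
  negbin m e j * negbin m e (S (S j)) < negbin m e (S j) ^ 2.
Proof.
  intros Hm He. rewrite !negbin_S.
  pose proof (negbin_pos m e j He).
  set (x := negbin m e j) in *.
  assert (Hj : 0 < INR (S j)) by (apply lt_0_INR; lia).
  assert (Hj' : 0 < INR (S (S j))) by (apply lt_0_INR; lia).
  assert (Hr : 0 < INR (m + S j)) by (apply lt_0_INR; lia).
  (* the ratio of consecutive terms, e (m + j + 1) / (j + 1), strictly decreases *)
  assert (Hdec : INR (m + S (S j)) * INR (S j) < INR (m + S j) * INR (S (S j))).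
  { rewrite <- !mult_INR. apply lt_INR. nia. }
  assert (Hratio : INR (m + S (S j)) / INR (S (S j)) < INR (m + S j) / INR (S j)).
  { apply (Rmult_lt_reg_r (INR (S j) * INR (S (S j)))); [nra|].
    replace (INR (m + S (S j)) / INR (S (S j)) * (INR (S j) * INR (S (S j))))
      with (INR (m + S (S j)) * INR (S j)) by (field; lra).
    replace (INR (m + S j) / INR (S j) * (INR (S j) * INR (S (S j))))
      with (INR (m + S j) * INR (S (S j))) by (field; lra).
    exact Hdec. }
  set (r1 := INR (m + S j) / INR (S j)) in *.
  set (r2 := INR (m + S (S j)) / INR (S (S j))) in *.
  assert (0 < r1) by (apply Rdiv_lt_0_compat; lra).
  replace (e * INR (m + S j) / INR (S j)) with (e * r1) by (unfold r1; field; lra).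
  replace (e * INR (m + S (S j)) / INR (S (S j))) with (e * r2) by (unfold r2; field; lra).
  replace (x * (x * (e * r1) * (e * r2))) with (x * x * (e * e) * r1 * r2) by ring.
  replace ((x * (e * r1)) ^ 2) with (x * x * (e * e) * r1 * r1) by ring.
  apply Rmult_lt_compat_l; [|exact Hratio].
  apply Rmult_lt_0_compat; [apply Rmult_lt_0_compat|]; nra.
Qed.

Lemma is_series_negbin m e : 0 <= e < 1 -> is_series (negbin m e) (/ (1 - e) ^ S m).
Proof.
  intros He. assert (Hgeom := is_series_geom e ltac:(rewrite Rabs_pos_eq; lra)).
  induction m as [|m IH].
  - replace (/ (1 - e) ^ 1) with (/ (1 - e)) by (simpl; now rewrite Rmult_1_r).
    eapply is_series_ext; [|exact Hgeom].
    intros n. unfold negbin. simpl. unfold Binomial.C. rewrite Nat.sub_diag.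
    simpl. field. apply INR_fact_neq_0.
  - (* Cauchy product with the geometric series; the coefficients add up by the
       hockey stick identity *)
    assert (Hprod := is_series_mult_pos _ _ _ _ IH Hgeom
      (fun n => negbin_nonneg m e n (proj1 He)) (fun n => pow_le _ n (proj1 He))).
    replace (/ (1 - e) ^ S (S m)) with (/ (1 - e) ^ S m * / (1 - e)).
    2:{ simpl. field. split; [|lra]. apply pow_nonzero. lra. }
    eapply is_series_ext; [|exact Hprod].
    intros n. simpl.
    rewrite (sum_eq _ (fun k => Binomial.C (m + k) k * e ^ n)).
    2:{ intros i Hi. unfold negbin. rewrite Rmult_assoc, <- pow_add.
        now replace (i + (n - i))%nat with n by lia. }
    rewrite <- scal_sum, hockey_stick. unfold negbin. ring.
Qed.

Lemma ex_series_negbin m e : 0 <= e < 1 -> ex_series (negbin m e).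
Proof. intros He. eexists. now apply is_series_negbin. Qed.

Lemma Ibeta_tail e k m : Ibeta e k (S m) = (1 - e) ^ S m * tail (negbin m e) k.
Proof.
  unfold Ibeta, tail. f_equal.
  rewrite (Series_incr_n_aux _ k).
  - apply Series_ext. intros n.
    replace (k <=? k + n)%nat with true by (symmetry; apply Nat.leb_le; lia).
    unfold negbin. do 2 f_equal. lia.
  - intros j Hj. now replace (k <=? j)%nat with false by (symmetry; apply Nat.leb_gt; lia).
Qed.

Lemma inv_INR_bounds p : 1 < INR p -> 0 < / INR p < 1.
Proof.
  intros Hp. split; [apply Rinv_0_lt_compat; lra|].
  rewrite <- Rinv_1. apply Rinv_lt_contravar; lra.
Qed.

Lemma density_tail m p r : 1 < INR p ->
  density (S m) p (S r) =
  ln (INR p) / (ln (tail (negbin m (/ INR p)) r) - ln (tail (negbin m (/ INR p)) (S r))).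
Proof.
  intros Hp. pose proof (inv_INR_bounds p Hp) as He.
  set (e := / INR p) in *.
  assert (Hsum := ex_series_negbin m e ltac:(lra)).
  assert (Hpos := tail_pos _ (fun j => negbin_pos m e j (proj1 He)) Hsum).
  assert (Hlt := tail_S_lt _ (fun j => negbin_pos m e j (proj1 He)) Hsum r).
  assert (Hln : ln (tail (negbin m e) (S r)) < ln (tail (negbin m e) r))
    by (apply ln_increasing; auto).
  assert (Hc : 0 < (1 - e) ^ S m) by (apply pow_lt; lra).
  assert (Hln2 : 0 < ln 2) by (rewrite <- ln_1; apply ln_increasing; lra).
  unfold density, weight, log2. simpl (S r - 1)%nat. rewrite Nat.sub_0_r.
  fold e. rewrite !Ibeta_tail, !ln_mult by auto.
  field. lra.
Qed.

Lemma density_S_lt m p r : (1 <= m)%nat -> 1 < INR p ->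
  density (S m) p (S (S r)) < density (S m) p (S r).
Proof.
  intros Hm Hp. rewrite !density_tail by exact Hp.
  pose proof (inv_INR_bounds p Hp) as He.
  set (e := / INR p) in *.
  assert (Hsum := ex_series_negbin m e ltac:(lra)).
  pose proof (fun j => negbin_pos m e j (proj1 He)) as Hterm.
  pose proof (tail_pos _ Hterm Hsum r) as T0.
  pose proof (tail_pos _ Hterm Hsum (S r)) as T1.
  pose proof (tail_pos _ Hterm Hsum (S (S r))) as T2.
  pose proof (tail_S_lt _ Hterm Hsum r) as D0.
  pose proof (tail_S_lt _ Hterm Hsum (S r)) as D1.
  pose proof (tail_log_concave _ Hterm Hsum
                (fun j => negbin_log_concave m e j Hm (proj1 He)) r) as LC.
  set (U0 := tail (negbin m e) r) in *.
  set (U1 := tail (negbin m e) (S r)) in *.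
  set (U2 := tail (negbin m e) (S (S r))) in *.
  assert (L0 : ln U1 < ln U0) by (apply ln_increasing; lra).
  assert (L1 : ln U2 < ln U1) by (apply ln_increasing; lra).
  assert (L2 : ln (U0 * U2) < ln (U1 * U1)) by (apply ln_increasing; nra).
  rewrite !ln_mult in L2 by lra.
  assert (Hlnp : 0 < ln (INR p)) by (rewrite <- ln_1; apply ln_increasing; lra).
  apply Rmult_lt_compat_l; [exact Hlnp|].
  apply Rinv_lt_contravar; [apply Rmult_lt_0_compat|]; lra.
Qed.

Lemma density_1 m p : 1 < INR p ->
  density (S m) p 1 = ln (INR p) / - ln (1 - (1 - / INR p) ^ S m).
Proof.
  intros Hp. rewrite density_tail by exact Hp.
  pose proof (inv_INR_bounds p Hp) as He.
  set (e := / INR p) in *.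
  assert (Hser := is_series_negbin m e ltac:(lra)).
  assert (T0 : tail (negbin m e) 0 = / (1 - e) ^ S m)
    by (now apply is_series_unique).
  assert (T1 : tail (negbin m e) 1 = / (1 - e) ^ S m - 1).
  { rewrite <- T0, (tail_S _ (ex_series_negbin m e ltac:(lra)) 0).
    rewrite negbin_0. ring. }
  rewrite T0, T1.
  set (c := (1 - e) ^ S m).
  assert (Hc : 0 < c < 1).
  { split; [apply pow_lt; lra|]. apply pow_lt_1_compat; [lra|lia]. }
  replace (/ c - 1) with ((1 - c) * / c) by (field; lra).
  rewrite ln_mult by (try apply Rinv_0_lt_compat; lra).
  f_equal. ring.
Qed.

Definition last_term_share (m : nat) (w : R) : R := w ^ m / sum_f_R0 (fun n => w ^ n) m.

Lemma geom_sum_pos m w : 0 <= w -> 0 < sum_f_R0 (fun n => w ^ n) m.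
Proof.
  intros Hw. induction m as [|m IH]; simpl; [lra|].
  pose proof (pow_le w (S m) Hw). simpl in *. lra.
Qed.

Lemma last_term_share_le m w1 w2 : 0 <= w1 <= w2 ->
  last_term_share m w1 <= last_term_share m w2.
Proof.
  intros Hw. unfold last_term_share.
  pose proof (geom_sum_pos m w1 ltac:(lra)) as S1.
  pose proof (geom_sum_pos m w2 ltac:(lra)) as S2.
  set (s1 := sum_f_R0 (fun n => w1 ^ n) m) in *.
  set (s2 := sum_f_R0 (fun n => w2 ^ n) m) in *.
  apply (Rmult_le_reg_r (s1 * s2)); [nra|].
  replace (w1 ^ m / s1 * (s1 * s2)) with (w1 ^ m * s2) by (field; lra).
  replace (w2 ^ m / s2 * (s1 * s2)) with (w2 ^ m * s1) by (field; lra).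
  unfold s1, s2. rewrite !scal_sum. apply sum_Rle. intros n Hn.
  rewrite <- (Nat.sub_add n m Hn), !pow_add.
  assert (w1 ^ (m - n) <= w2 ^ (m - n)) by (apply pow_incr; lra).
  assert (0 <= w1 ^ n * w2 ^ n) by (apply Rmult_le_pos; apply pow_le; lra).
  nra.
Qed.

Lemma exp_le_mono a b : a <= b -> exp a <= exp b.
Proof.
  intros Hab. destruct (Rle_lt_or_eq_dec a b Hab) as [Hlt | <-]; [|lra].
  left. now apply exp_increasing.
Qed.

(* [weight_one m (ln p)] is [ln 2 * weight (S m) p 1]. *)
Definition weight_one (m : nat) (y : R) : R := - ln (1 - (1 - exp (- y)) ^ S m).

Lemma weight_one_0 m : weight_one m 0 = 0.
Proof.
  unfold weight_one. rewrite Ropp_0, exp_0, Rminus_diag, pow_i, Rminus_0_r, ln_1 by lia.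
  apply Ropp_0.
Qed.

Lemma weight_one_pos m y : 0 < y -> 0 < weight_one m y.
Proof.
  intros Hy. unfold weight_one.
  assert (exp (- y) < 1) by (rewrite <- exp_0; apply exp_increasing; lra).
  pose proof (exp_pos (- y)).
  assert (0 < (1 - exp (- y)) ^ S m < 1).
  { split; [apply pow_lt; lra|]. apply pow_lt_1_compat; [lra|lia]. }
  assert (ln (1 - (1 - exp (- y)) ^ S m) < 0)
    by (rewrite <- ln_1; apply ln_increasing; lra).
  lra.
Qed.

Definition weight_one_slope (m : nat) (y : R) : R :=
  INR (S m) * last_term_share m (1 - exp (- y)).

Lemma weight_one_slope_le m s t : 0 <= s <= t -> weight_one_slope m s <= weight_one_slope m t.
Proof.
  intros Hst. apply Rmult_le_compat_l; [apply pos_INR|].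
  apply last_term_share_le.
  pose proof (exp_le_mono (- t) (- s) ltac:(lra)).
  pose proof (exp_le_mono (- s) 0 ltac:(lra)). rewrite exp_0 in *. lra.
Qed.

Lemma weight_one_derive m y : 0 <= y ->
  derivable_pt_lim (weight_one m) y (weight_one_slope m y).
Proof.
  intros Hy. apply is_derive_Reals. unfold weight_one, weight_one_slope, last_term_share.
  assert (Hexp : 0 < exp (- y) <= 1).
  { split; [apply exp_pos|]. rewrite <- exp_0. apply exp_le_mono. lra. }
  set (w := 1 - exp (- y)).
  assert (Hw : 0 <= w < 1) by (unfold w; lra).
  assert (Hpow := pow_lt_1_compat w (S m) Hw ltac:(lia)). simpl pow in Hpow.
  assert (Hsum := geom_sum_pos m w (proj1 Hw)).
  assert (Hgp := GP_finite w m). rewrite Nat.add_1_r in Hgp. simpl pow in Hgp.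
  auto_derive; replace (1 + - exp (- y)) with w by (unfold w; ring).
  - lra.
  - change (match m with 0%nat => 1 | S _ => INR m + 1 end) with (INR (S m)).
    replace (exp (- y)) with (1 - w) by (unfold w; ring).
    replace (1 + - (w * w ^ m)) with ((1 - w) * sum_f_R0 (fun n => w ^ n) m) by lra.
    field. lra.
Qed.

Lemma origin_slope_le (f f' : R -> R) x y :
  f 0 = 0 ->
  (forall t, 0 <= t -> derivable_pt_lim f t (f' t)) ->
  (forall s t, 0 <= s <= t -> f' s <= f' t) ->
  0 < x <= y -> f x * y <= f y * x.
Proof.
  intros Hf0 Hder Hmono Hxy.
  destruct (Req_dec x y) as [<- | Hne]; [lra|].
  destruct (MVT_cor2 f f' 0 x ltac:(lra) (fun c Hc => Hder c ltac:(lra)))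
    as [c1 [E1 C1]].
  destruct (MVT_cor2 f f' x y ltac:(lra) (fun c Hc => Hder c ltac:(lra)))
    as [c2 [E2 C2]].
  rewrite Hf0 in E1.
  (* both chords are compared with the slope [f' x] *)
  assert (M1 : f' c1 <= f' x) by (apply Hmono; lra).
  assert (M2 : f' x <= f' c2) by (apply Hmono; lra).
  assert (A1 : 0 <= (f' c2 - f' x) * ((y - x) * x)) by (apply Rmult_le_pos; nra).
  assert (A2 : 0 <= (f' x - f' c1) * (x * (y - x))) by (apply Rmult_le_pos; nra).
  nra.
Qed.

Lemma density_1_antitone m p q : 1 < INR p -> (p <= q)%nat ->
  density (S m) q 1 <= density (S m) p 1.
Proof.
  intros Hp Hpq.
  assert (Hq : 1 < INR q) by (apply le_INR in Hpq; lra).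
  assert (Hw : forall x, 1 < INR x ->
            density (S m) x 1 = ln (INR x) / weight_one m (ln (INR x))).
  { intros x Hx. rewrite density_1 by exact Hx. unfold weight_one.
    now rewrite exp_Ropp, exp_ln by lra. }
  rewrite !Hw by assumption.
  assert (Hy1 : 0 < ln (INR p)) by (rewrite <- ln_1; apply ln_increasing; lra).
  assert (Hy12 : ln (INR p) <= ln (INR q)).
  { apply ln_le; [lra|]. now apply le_INR. }
  pose proof (origin_slope_le (weight_one m) (weight_one_slope m) _ _ (weight_one_0 m)
    (weight_one_derive m) (weight_one_slope_le m) (conj Hy1 Hy12)) as Hslope.
  pose proof (weight_one_pos m _ Hy1) as H1.
  pose proof (weight_one_pos m (ln (INR q)) ltac:(lra)) as H2.
  set (y1 := ln (INR p)) in *. set (y2 := ln (INR q)) in *.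
  set (h1 := weight_one m y1) in *. set (h2 := weight_one m y2) in *.
  apply (Rmult_le_reg_r (h1 * h2)); [nra|].
  replace (y2 / h2 * (h1 * h2)) with (h1 * y2) by (field; lra).
  replace (y1 / h1 * (h1 * h2)) with (h2 * y1) by (field; lra).
  exact Hslope.
Qed.

Lemma prime_INR_gt_1 p : is_prime p -> 1 < INR p.
Proof.
  intros Hp. apply prime_ge_2 in Hp.
  replace 1 with (INR 1) by reflexivity. apply lt_INR. lia.
Qed.

Theorem mainTheorem10 (mu : nat) (Hmu : (2 <= mu)%nat) :
  (forall p : nat, is_prime p ->
     forall r : nat, (1 <= r)%nat -> density mu p (S r) < density mu p r)
  /\ (forall p : nat, is_prime p ->
        density mu p 1 = ln (INR p) / - ln (1 - (1 - / INR p) ^ mu))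
  /\ (forall p q : nat, is_prime p -> is_prime q -> (p <= q)%nat ->
        density mu q 1 <= density mu p 1).
Proof.
  destruct mu as [|m]; [lia|].
  split; [|split].
  - intros p Hp [|r] Hr; [lia|].
    apply density_S_lt; [lia | now apply prime_INR_gt_1].
  - intros p Hp. apply density_1. now apply prime_INR_gt_1.
  - intros p q Hp _ Hpq. apply density_1_antitone; [now apply prime_INR_gt_1 | exact Hpq].
Qed.
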